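(* Let $(G,D,\star)$ be a probabilistic metric space with $\star$ continuous. Then: (1) $(Lip^1_\star(G,\Delta^+),\overline{\mathbb D},\star)$ is a complete probabilistic metric space, and $\delta:G\to Lip^1_\star(G,\Delta^+)$, $a\mapsto\delta_a$, is an isometric embedding, i.e. $\overline{\mathbb D}(\delta_a,\delta_b)=D(a,b)$; (2) if moreover $(G,\cdot,D,\star)$ is an invariant probabilistic metric group and $\star$ is also sup-continuous, then $\delta:(G,\cdot)\to(Lip^1_\star(G,\Delta^+),\odot)$ is a group homomorphism.
   Context: A distribution function is a nondecreasing, left-continuous function $F:[-\infty,+\infty]\to[0,1]$ with $F(-\infty)=0$, $F(+\infty)=1$; $\Delta^+$ is the set of distribution functions with $F(0)=0$, ordered pointwise (a complete lattice with maximum $\mathcal H_0$ and minimum $\mathcal H_\infty$, where $\mathcal H_0(t)=0$ for $t\le0$, $1$ for $t>0$, and $\mathcal H_\infty(t)=0$ for $t<+\infty$, $\mathcal H_\infty(+\infty)=1$). A triangle function is a binary operation $\star$ on $\Delta^+$ that is commutative, associative, nondecreasing in each argument, with $F\star\mathcal H_0=F$; it is sup-continuous if $\sup_i(F_i\star L)=(\sup_iF_i)\star L$ for every nonempty family $(F_i)$ and every $L$. $F_n\xrightarrow{w}F$ means $F_n(t)\to F(t)$ at every continuity point $t\in\mathbb R$ of $F$; $\star$ is continuous if $F_n\star L_n\xrightarrow{w}F\star L$ whenever $F_n\xrightarrow{w}F$, $L_n\xrightarrow{w}L$. A probabilistic metric space $(G,D,\star)$ consists of a set $G$, a triangle function $\star$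 and $D:G\times G\to\Delta^+$ with (i) $D(p,q)=\mathcal H_0$ iff $p=q$; (ii) $D(p,q)=D(q,p)$; (iii) $D(p,q)\star D(q,r)\le D(p,r)$. If $(G,\cdot)$ is a group and $D(pr,qr)=D(rp,rq)=D(p,q)$ for all $p,q,r$, it is an invariant probabilistic metric group. A sequence $(z_n)$ is Cauchy if $D(z_n,z_p)\xrightarrow{w}\mathcal H_0$ as $n,p\to\infty$; completeness means every Cauchy sequence has a point $z$ with $D(z_n,z)\xrightarrow{w}\mathcal H_0$. $Lip^1_\star(G,\Delta^+)$ is the set of maps $f:G\to\Delta^+$ with $D(x,y)\star f(y)\le f(x)$ for all $x,y$. $\delta_a(y)=D(y,a)$. $\Pi(G)$ is the set of $f\in Lip^1_\star(G,\Delta^+)$ for which there is a Cauchy sequence $(a_n)\subset G$ with $D(a_n,x)\xrightarrow{w}f(x)$ for all $x$. $\mathbb D(f,g)=\sup_{x\in G}f(x)\star g(x)$ for $f,g\in\Pi(G)$. $\overline{\mathbb D}$ on $Lip^1_\star(G,\Delta^+)$ is: $\overline{\mathbb D}(f,g)=\mathbb D(f,g)$ if $f,g\in\Pi(G)$; $\overline{\mathbb D}(f,g)=\mathcal H_0$ if $f=g$; $\overline{\mathbb D}(f,g)=\mathcal H_\infty$ if $f\ne g$ and $(f,g)\notin\Pi(G)\times\Pi(G)$. For maps $f,g:G\to\Delta^+$, $(f\odot g)(x)=\sup_{y,z\in G,\ yz=x}f(y)\star g(z)$. *)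

From Stdlib Require Import Reals Classical ClassicalEpsilon FunctionalExtensionality.
Open Scope R_scope.

(* An element of Delta^+ is represented by its restriction to the real line
   (values at -oo and +oo are fixed to 0 and 1 respectively). *)
Definition DF := R -> R.

Definition fle (F L : DF) : Prop := forall t, F t <= L t.

Definition left_continuous (F : DF) : Prop :=
  forall t eps, 0 < eps -> exists del, 0 < del /\
    forall s, t - del < s < t -> Rabs (F s - F t) < eps.

Definition Dplus (F : DF) : Prop :=
  (forall t, 0 <= F t <= 1) /\
  (forall s t, s <= t -> F s <= F t) /\
  left_continuous F /\
  F 0 = 0.

Definition H0 : DF := fun t => if Rle_dec t 0 then 0 else 1.
Definition Hinf : DF := fun _ => 0.

(* lattice supremum in Delta^+ (pointwise; the empty sup is H_infinity) *)
Definition Rsup (E : R -> Prop) : R :=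
  epsilon (inhabits 0) (fun m => is_lub (fun y => y = 0 \/ E y) m).
Definition fsup {I : Type} (F : I -> DF) : DF :=
  fun t => Rsup (fun y => exists i, y = F i t).

Definition triangle_function (star : DF -> DF -> DF) : Prop :=
  (forall F L, Dplus F -> Dplus L -> Dplus (star F L)) /\
  (forall F L, Dplus F -> Dplus L -> star F L = star L F) /\
  (forall F L M, Dplus F -> Dplus L -> Dplus M ->
      star (star F L) M = star F (star L M)) /\
  (forall F F' L, Dplus F -> Dplus F' -> Dplus L -> fle F F' ->
      fle (star F L) (star F' L)) /\
  (forall F L L', Dplus F -> Dplus L -> Dplus L' -> fle L L' ->
      fle (star F L) (star F L')) /\
  (forall F, Dplus F -> star F H0 = F).

Definition sup_continuous (star : DF -> DF -> DF) : Prop :=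
  forall (I : Type) (F : I -> DF) (L : DF), inhabited I ->
    (forall i, Dplus (F i)) -> Dplus L ->
    fsup (fun i => star (F i) L) = star (fsup F) L.

Definition wconv (Fn : nat -> DF) (F : DF) : Prop :=
  forall t, continuity_pt F t -> Un_cv (fun n => Fn n t) (F t).

Definition star_continuous (star : DF -> DF -> DF) : Prop :=
  forall (Fn Ln : nat -> DF) (F L : DF),
    (forall n, Dplus (Fn n)) -> (forall n, Dplus (Ln n)) -> Dplus F -> Dplus L ->
    wconv Fn F -> wconv Ln L -> wconv (fun n => star (Fn n) (Ln n)) (star F L).

Definition PMspace (X : Type) (Dx : X -> X -> DF) (star : DF -> DF -> DF) : Prop :=
  triangle_function star /\
  (forall p q, Dplus (Dx p q)) /\
  (forall p q, Dx p q = H0 <-> p = q) /\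
  (forall p q, Dx p q = Dx q p) /\
  (forall p q r, fle (star (Dx p q) (Dx q r)) (Dx p r)).

Definition Cauchy_seq (X : Type) (Dx : X -> X -> DF) (z : nat -> X) : Prop :=
  forall t, continuity_pt H0 t -> forall eps, 0 < eps ->
    exists N, forall n p, (N <= n)%nat -> (N <= p)%nat ->
      Rabs (Dx (z n) (z p) t - H0 t) < eps.

Definition complete (X : Type) (Dx : X -> X -> DF) : Prop :=
  forall z : nat -> X, Cauchy_seq X Dx z ->
    exists z0, wconv (fun n => Dx (z n) z0) H0.

Definition isLip (G : Type) (D : G -> G -> DF) (star : DF -> DF -> DF)
    (f : G -> DF) : Prop :=
  (forall x, Dplus (f x)) /\ (forall x y, fle (star (D x y) (f y)) (f x)).

Definition delta (G : Type) (D : G -> G -> DF) (a : G) : G -> DF :=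
  fun y => D y a.

Definition inPi (G : Type) (D : G -> G -> DF) (star : DF -> DF -> DF)
    (f : G -> DF) : Prop :=
  isLip G D star f /\
  exists a : nat -> G, Cauchy_seq G D a /\
    forall x, wconv (fun n => D (a n) x) (f x).

Definition DD (G : Type) (star : DF -> DF -> DF) (f g : G -> DF) : DF :=
  fsup (fun x : G => star (f x) (g x)).

Definition Dbar (G : Type) (D : G -> G -> DF) (star : DF -> DF -> DF)
    (f g : G -> DF) : DF :=
  if excluded_middle_informative (inPi G D star f /\ inPi G D star g)
  then DD G star f g
  else if excluded_middle_informative (f = g) then H0 else Hinf.

Definition LipT (G : Type) (D : G -> G -> DF) (star : DF -> DF -> DF) : Type :=
  { f : G -> DF | isLip G D star f }.

Definition DbarL (G : Type) (D : G -> G -> DF) (star : DF -> DF -> DF)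
    (f g : LipT G D star) : DF :=
  Dbar G D star (proj1_sig f) (proj1_sig g).

Definition is_group (G : Type) (mul : G -> G -> G) (e : G) (inv : G -> G) : Prop :=
  (forall x y z, mul (mul x y) z = mul x (mul y z)) /\
  (forall x, mul e x = x /\ mul x e = x) /\
  (forall x, mul (inv x) x = e /\ mul x (inv x) = e).

Definition invariant (G : Type) (mul : G -> G -> G) (D : G -> G -> DF) : Prop :=
  forall p q r, D (mul p r) (mul q r) = D p q /\ D (mul r p) (mul r q) = D p q.

Definition odot (G : Type) (mul : G -> G -> G) (star : DF -> DF -> DF)
    (f g : G -> DF) : G -> DF :=
  fun x => fsup (fun yz : { p : G * G | mul (fst p) (snd p) = x } =>
                   star (f (fst (proj1_sig yz))) (g (snd (proj1_sig yz)))).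

From Pilot Require Import Defs.
From Stdlib Require Import Reals ZArith Lra Lia.
From Stdlib Require Import Classical ClassicalEpsilon FunctionalExtensionality ProofIrrelevance.
From Stdlib Require Cantor.
Open Scope R_scope.

(* An element [f] of [Pi], generated by a Cauchy sequence [a] of [G], is the weak limit of
   [D (a n) _].  Since distribution functions have dense sets of common continuity points,
   inequalities pass to weak limits; with the continuity of the triangle function this gives
   [star (f x) (f y) <= D x y], the triangle inequality for [DD] on [Pi], and [DD f f = H0].
   For completeness, pick points [c n] at which [g n] is close to [H0]: then [c] is Cauchy in [G],
   and [D (c n) x] converges weakly for every [x] by Helly's selection theorem, all subsequential
   limits being equal because the family is Lipschitz along a Cauchy family; the limit is in [Pi]
   and is the limit of [g]. Outside [Pi] the metric [Dbar] is discrete.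
   By invariance, the supremum defining [odot (delta a) (delta b) x] is attained at [(x b^-1, b)],
   where it equals [D x (a b)]; the triangle inequality bounds the other terms. *)

Ltac solve_Rabs := unfold Rabs in *; repeat destruct Rcase_abs; lra.

Lemma Dplus_ge0 F t : Dplus F -> 0 <= F t.
Proof. intros [H _]. apply H. Qed.

Lemma Dplus_le1 F t : Dplus F -> F t <= 1.
Proof. intros [H _]. apply H. Qed.

Lemma Dplus_mono F s t : Dplus F -> s <= t -> F s <= F t.
Proof. intros [_ [H _]]. apply H. Qed.

Lemma Dplus_left_continuous F : Dplus F -> left_continuous F.
Proof. intros [_ [_ [H _]]]. exact H. Qed.

Lemma Dplus_nonpos F t : Dplus F -> t <= 0 -> F t = 0.
Proof.
  intros HF Ht. pose proof (Dplus_ge0 F t HF). pose proof (Dplus_mono F t 0 HF Ht).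
  destruct HF as [_ [_ [_ HF0]]]. lra.
Qed.

Lemma H0_pos t : 0 < t -> H0 t = 1.
Proof. intros. unfold H0. destruct (Rle_dec t 0); lra. Qed.

Lemma H0_nonpos t : t <= 0 -> H0 t = 0.
Proof. intros. unfold H0. destruct (Rle_dec t 0); lra. Qed.

Lemma fle_refl F : fle F F.
Proof. intros t; lra. Qed.

Lemma fle_trans F G K : fle F G -> fle G K -> fle F K.
Proof. intros A B t. specialize (A t); specialize (B t); lra. Qed.

Lemma fle_antisym F G : fle F G -> fle G F -> F = G.
Proof.
  intros A B. apply functional_extensionality. intros t. specialize (A t); specialize (B t); lra.
Qed.

Lemma fle_H0 F : Dplus F -> fle F H0.
Proof.
  intros HF t. destruct (Rle_dec t 0).
  - rewrite H0_nonpos, (Dplus_nonpos F t); auto; lra.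
  - rewrite H0_pos by lra. apply Dplus_le1; auto.
Qed.

Lemma Hinf_fle F : Dplus F -> fle Hinf F.
Proof. intros HF t. apply Dplus_ge0, HF. Qed.

Lemma Dplus_H0 : Dplus H0.
Proof.
  split; [|split; [|split]].
  - intros t; unfold H0; destruct (Rle_dec t 0); lra.
  - intros s t Hst; unfold H0; destruct (Rle_dec t 0), (Rle_dec s 0); lra.
  - intros t eps He. destruct (Rle_dec t 0).
    + exists 1; split; [lra|]. intros s Hs. rewrite !H0_nonpos by lra. solve_Rabs.
    + exists t; split; [lra|]. intros s Hs. rewrite !H0_pos by lra. solve_Rabs.
  - apply H0_nonpos; lra.
Qed.

Lemma Dplus_Hinf : Dplus Hinf.
Proof.
  unfold Hinf. split; [|split; [|split]]; try (intros; lra).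
  intros t eps He. exists 1; split; [lra|]. intros. solve_Rabs.
Qed.

Lemma H0_neq_Hinf : H0 <> Hinf.
Proof.
  intros H. assert (E : H0 1 = Hinf 1) by now rewrite H.
  rewrite H0_pos in E; unfold Hinf in E; lra.
Qed.

Lemma Rsup_is_lub (E : R -> Prop) (B : R) :
  (forall y, E y -> y <= B) -> is_lub (fun y => y = 0 \/ E y) (Rsup E).
Proof.
  intros HB. unfold Rsup. apply epsilon_spec.
  destruct (completeness (fun y => y = 0 \/ E y)) as [m Hm].
  - exists (Rmax 0 B). intros y [->|Hy]; [apply Rmax_l|].
    apply Rle_trans with B; [auto|apply Rmax_r].
  - exists 0; left; reflexivity.
  - exists m; exact Hm.
Qed.

Lemma Rsup_ub (E : R -> Prop) B y : (forall y, E y -> y <= B) -> E y -> y <= Rsup E.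
Proof. intros HB Hy. apply (Rsup_is_lub E B HB); auto. Qed.

Lemma Rsup_ge0 (E : R -> Prop) B : (forall y, E y -> y <= B) -> 0 <= Rsup E.
Proof. intros HB. apply (Rsup_is_lub E B HB); auto. Qed.

Lemma Rsup_least (E : R -> Prop) M : (forall y, E y -> y <= M) -> 0 <= M -> Rsup E <= M.
Proof. intros HB HM. apply (Rsup_is_lub E M HB). intros y [->|Hy]; auto. Qed.

Lemma Rsup_approx (E : R -> Prop) B eps : (forall y, E y -> y <= B) -> 0 < eps ->
  Rsup E - eps < 0 \/ exists y, E y /\ Rsup E - eps < y.
Proof.
  intros HB He. destruct (Rsup_is_lub E B HB) as [_ Hleast].
  apply NNPP; intros Hn.
  enough (Rsup E <= Rsup E - eps) by lra.
  apply Hleast. intros y [->|Hy]; apply Rnot_lt_le; intros Hc; apply Hn; eauto.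
Qed.

Section FamilySup.
Context {I : Type} (F : I -> DF) (HF : forall i, Dplus (F i)).

Let values_le1 t : forall y, (exists i, y = F i t) -> y <= 1.
Proof. intros y [i ->]. apply Dplus_le1; auto. Qed.

Lemma fsup_ub i t : F i t <= fsup F t.
Proof. apply (Rsup_ub _ 1); [apply values_le1|eauto]. Qed.

Lemma fsup_ge0 t : 0 <= fsup F t.
Proof. apply (Rsup_ge0 _ 1), values_le1. Qed.

Lemma fsup_least t M : (forall i, F i t <= M) -> 0 <= M -> fsup F t <= M.
Proof. intros H HM. apply Rsup_least; auto. intros y [i ->]; auto. Qed.

Lemma fsup_approx t eps : 0 < eps -> fsup F t - eps < 0 \/ exists i, fsup F t - eps < F i t.
Proof.
  intros He. destruct (Rsup_approx _ 1 eps (values_le1 t) He) as [H|[y [[i ->] Hy]]]; eauto.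
Qed.

Lemma fsup_mono s t : s <= t -> fsup F s <= fsup F t.
Proof.
  intros Hst. apply fsup_least; [|apply fsup_ge0]. intros i.
  apply Rle_trans with (F i t); [apply Dplus_mono; auto|apply fsup_ub].
Qed.

Lemma Dplus_fsup : Dplus (fsup F).
Proof.
  split; [|split; [|split]].
  - intros t; split; [apply fsup_ge0|]. apply fsup_least; [|lra]. intros; apply Dplus_le1; auto.
  - apply fsup_mono.
  - intros t eps He. destruct (fsup_approx t (eps/2)) as [H|[i Hi]]; [lra| |].
    + exists 1; split; [lra|]. intros s Hs.
      pose proof (fsup_mono s t ltac:(lra)). pose proof (fsup_ge0 s). solve_Rabs.
    + destruct (Dplus_left_continuous _ (HF i) t (eps/2)) as [del [Hd Hdel]]; [lra|].
      exists del; split; auto. intros s Hs. specialize (Hdel s Hs).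
      pose proof (fsup_mono s t ltac:(lra)). pose proof (fsup_ub i s). solve_Rabs.
  - apply Rle_antisym; [|apply fsup_ge0]. apply fsup_least; [|lra].
    intros i. rewrite Dplus_nonpos; auto; lra.
Qed.

End FamilySup.

Lemma continuity_pt_of_ball f x :
  (forall eps, 0 < eps -> exists del, 0 < del /\
     forall y, Rabs (y - x) < del -> Rabs (f y - f x) < eps) -> continuity_pt f x.
Proof.
  intros H eps He. destruct (H eps He) as [d [Hd Hy]]. exists d; split; auto.
  intros y [_ Hyd]. apply Hy. exact Hyd.
Qed.

Lemma continuity_pt_ball f x : continuity_pt f x -> forall eps, 0 < eps ->
  exists del, 0 < del /\ forall y, Rabs (y - x) < del -> Rabs (f y - f x) < eps.
Proof.
  intros H eps He. destruct (H eps He) as [d [Hd Hy]]. exists d; split; auto.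
  intros y Hyx. destruct (Req_dec x y) as [<-|Hne]; [solve_Rabs|].
  apply (Hy y). split; [split; [exact I|exact Hne]|exact Hyx].
Qed.

Lemma Un_cv_const c : Un_cv (fun _ => c) c.
Proof. intros eps He. exists 0%nat. intros. unfold Rdist. solve_Rabs. Qed.

Lemma Un_cv_le_eventually (u v : nat -> R) l1 l2 N : Un_cv u l1 -> Un_cv v l2 ->
  (forall n, (N <= n)%nat -> u n <= v n) -> l1 <= l2.
Proof.
  intros Hu Hv Hle. apply (Rle_cv_lim (Un := fun n => u (N + n)%nat) (Vn := fun n => v (N + n)%nat)).
  - intros n; apply Hle; lia.
  - intros eps He. destruct (Hu eps He) as [M HM]. exists M. intros n Hn. apply HM; lia.
  - intros eps He. destruct (Hv eps He) as [M HM]. exists M. intros n Hn. apply HM; lia.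
Qed.

Lemma Un_cv_subseq (u : nat -> R) l (phi : nat -> nat) :
  Un_cv u l -> (forall j, (j <= phi j)%nat) -> Un_cv (fun j => u (phi j)) l.
Proof.
  intros H Hp eps He. destruct (H eps He) as [N HN]. exists N. intros n Hn.
  apply HN. specialize (Hp n). lia.
Qed.

Lemma not_Un_cv_subseq (u : nat -> R) l : ~ Un_cv u l ->
  exists eps, 0 < eps /\ exists ps : nat -> nat,
    forall N, (N <= ps N)%nat /\ eps <= Rdist (u (ps N)) l.
Proof.
  intros Hn. apply NNPP; intros H1. apply Hn. intros eps He. apply NNPP; intros H2.
  apply H1. exists eps; split; auto.
  apply (choice (fun N n => (N <= n)%nat /\ eps <= Rdist (u n) l)). intros N.
  apply NNPP; intros H3. apply H2. exists N. intros n Hn'.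
  apply Rnot_le_lt. intros H4. apply H3. eauto.
Qed.

Lemma inv_INR_small eps : 0 < eps -> exists k : nat, forall j, (k <= j)%nat -> / (INR j + 1) < eps.
Proof.
  intros He. destruct (archimed (/eps)) as [Hu _].
  exists (Z.to_nat (up (/eps))). intros j Hj.
  assert (0 < /eps) by (apply Rinv_0_lt_compat; lra).
  assert (/eps < INR j + 1).
  { apply le_INR in Hj. rewrite INR_IZR_INZ, Z2Nat.id in Hj; [lra|]. apply le_IZR; lra. }
  rewrite <- (Rinv_inv eps). apply Rinv_lt_contravar; auto. apply Rmult_lt_0_compat; lra.
Qed.

(** * Continuity points of monotone functions are dense *)

Section MonotoneContinuityPoints.
Variable h : R -> R.
Hypothesis h_mono : forall s t, s <= t -> h s <= h t.

(* Keep the second or the fourth fifth of [a, b], whichever h increases least on: the two are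
   disjoint, so the increment of h is at least halved. *)
Definition shrink_step (p : R * R) : R * R :=
  let a := fst p in let d := (snd p - a) / 5 in
  if Rle_dec (h (a + 2*d) - h (a + d)) (h (a + 4*d) - h (a + 3*d))
  then (a + d, a + 2*d) else (a + 3*d, a + 4*d).

Fixpoint shrink (p : R * R) (k : nat) : R * R :=
  match k with O => p | S k => shrink_step (shrink p k) end.

Lemma shrink_step_spec p : fst p < snd p ->
  fst p < fst (shrink_step p) /\ fst (shrink_step p) < snd (shrink_step p) /\
  snd (shrink_step p) < snd p /\
  h (snd (shrink_step p)) - h (fst (shrink_step p)) <= (h (snd p) - h (fst p)) / 2.
Proof.
  destruct p as [a b]. simpl. intros Hab. unfold shrink_step; simpl.
  set (d := (b - a)/5). assert (0 < d) by (unfold d; lra).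
  assert (b = a + 5*d) by (unfold d; lra).
  pose proof (h_mono a (a+d) ltac:(lra)). pose proof (h_mono (a+2*d) (a+3*d) ltac:(lra)).
  pose proof (h_mono (a+4*d) b ltac:(lra)).
  destruct (Rle_dec _ _); simpl; repeat split; lra.
Qed.

Lemma shrink_spec a b k : a < b -> fst (shrink (a,b) k) < snd (shrink (a,b) k) /\
  h (snd (shrink (a,b) k)) - h (fst (shrink (a,b) k)) <= (h b - h a) / 2^k.
Proof.
  intros Hab. induction k as [|k [IH1 IH2]]; simpl.
  - split; [lra|]. unfold Rdiv; rewrite Rinv_1; lra.
  - destruct (shrink_step_spec _ IH1) as [_ [Hlt [_ Hhalf]]]. split; auto.
    unfold Rdiv in *. rewrite Rinv_mult. lra.
Qed.

Lemma shrink_nested a b j k : a < b -> (j <= k)%nat ->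
  fst (shrink (a,b) j) <= fst (shrink (a,b) k) /\ snd (shrink (a,b) k) <= snd (shrink (a,b) j).
Proof.
  intros Hab Hjk. induction Hjk as [|k Hjk IH]; [lra|]. simpl.
  destruct (shrink_step_spec (shrink (a,b) k)) as [A [_ [C _]]]; [apply shrink_spec; auto|]. lra.
Qed.

Lemma shrink_common_point a b : a < b ->
  exists x, forall k, fst (shrink (a,b) k) < x < snd (shrink (a,b) k).
Proof.
  intros Hab. set (u := fun k => fst (shrink (a,b) k)).
  assert (Hgrow : Un_growing u) by (intros k; apply shrink_nested; auto).
  assert (Hle : forall j k, u j <= snd (shrink (a,b) k)).
  { intros j k. unfold u. destruct (Compare_dec.le_ge_dec j k) as [Hjk|Hkj].
    - destruct (shrink_nested a b j k Hab Hjk), (shrink_spec a b k Hab). lra.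
    - destruct (shrink_nested a b k j Hab Hkj), (shrink_spec a b j Hab). lra. }
  destruct (growing_cv u Hgrow) as [x Hx]; [exists (snd (shrink (a,b) 0)); intros y [i ->]; auto|].
  exists x. intros k.
  destruct (shrink_step_spec (shrink (a,b) k)) as [A [_ [C _]]]; [apply shrink_spec; auto|].
  pose proof (growing_ineq u x Hgrow Hx (S k)).
  assert (x <= snd (shrink (a,b) (S k))).
  { apply (Un_cv_le_eventually u (fun _ => snd (shrink (a,b) (S k))) x _ 0); auto using Un_cv_const. }
  unfold u in *; simpl in *. lra.
Qed.

Lemma pow2_ge_INR k : INR k <= 2 ^ k.
Proof.
  induction k as [|k IH]; [simpl; lra|]. rewrite S_INR. simpl.
  assert (1 <= 2^k) by (apply pow_R1_Rle; lra). lra.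
Qed.

Lemma div_pow2_small c eps : 0 <= c -> 0 < eps -> exists k, c / 2^k < eps.
Proof.
  intros Hc He. destruct (archimed (c / eps)) as [Hup _].
  assert (0 <= c / eps) by (unfold Rdiv; apply Rmult_le_pos; [lra|left; apply Rinv_0_lt_compat; lra]).
  set (k := Z.to_nat (up (c / eps))). exists k.
  assert (c / eps < 2^k).
  { apply Rlt_le_trans with (INR k); [|apply pow2_ge_INR].
    unfold k. rewrite INR_IZR_INZ, Z2Nat.id; [lra|]. apply le_IZR. lra. }
  assert (0 < 2^k) by (apply pow_lt; lra).
  apply Rmult_lt_reg_r with (2^k); auto. unfold Rdiv in *. rewrite Rmult_assoc, Rinv_l by lra.
  apply Rmult_lt_reg_r with (/eps); [apply Rinv_0_lt_compat; lra|].
  replace (eps * 2^k * /eps) with (2^k) by (field; lra). lra.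
Qed.

Lemma mono_continuity_pt_dense a b : a < b -> exists x, a < x < b /\ continuity_pt h x.
Proof.
  intros Hab. destruct (shrink_common_point a b Hab) as [x Hx].
  exists x. split; [specialize (Hx 0%nat); simpl in Hx; lra|].
  apply continuity_pt_of_ball. intros eps He.
  destruct (div_pow2_small (h b - h a) eps) as [k Hk]; [pose proof (h_mono a b); lra|auto|].
  destruct (Hx k) as [Hl Hr]. destruct (shrink_spec a b k Hab) as [_ Hosc].
  set (l := fst (shrink (a,b) k)) in *. set (r := snd (shrink (a,b) k)) in *.
  exists (Rmin (x - l) (r - x)). split; [apply Rmin_pos; lra|].
  intros y Hy. pose proof (Rmin_l (x - l) (r - x)). pose proof (Rmin_r (x - l) (r - x)).
  assert (l < y < r) by solve_Rabs.
  pose proof (h_mono l y ltac:(lra)). pose proof (h_mono y r ltac:(lra)).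
  pose proof (h_mono l x ltac:(lra)). pose proof (h_mono x r ltac:(lra)).
  solve_Rabs.
Qed.

End MonotoneContinuityPoints.

Lemma continuity_pt_mono_summand F G u :
  (forall s t, s <= t -> F s <= F t) -> (forall s t, s <= t -> G s <= G t) ->
  continuity_pt (fun x => F x + G x) u -> continuity_pt F u.
Proof.
  intros HF HG Hc. apply continuity_pt_of_ball. intros eps He.
  destruct (continuity_pt_ball _ _ Hc eps He) as [d [Hd H]].
  exists d; split; auto. intros y Hy. specialize (H y Hy).
  destruct (Rle_dec y u) as [Hyu|Hyu].
  - pose proof (HF _ _ Hyu); pose proof (HG _ _ Hyu). solve_Rabs.
  - pose proof (HF u y ltac:(lra)); pose proof (HG u y ltac:(lra)). solve_Rabs.
Qed.

Lemma Dplus_common_continuity_pt F G a b : Dplus F -> Dplus G -> a < b ->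
  exists x, a < x < b /\ continuity_pt F x /\ continuity_pt G x.
Proof.
  intros HF HG Hab.
  assert (HFm : forall s t, s <= t -> F s <= F t) by (intros; apply Dplus_mono; auto).
  assert (HGm : forall s t, s <= t -> G s <= G t) by (intros; apply Dplus_mono; auto).
  destruct (mono_continuity_pt_dense (fun x => F x + G x)) with a b as [x [Hx Hc]]; auto.
  { intros s t Hst. pose proof (HFm s t Hst); pose proof (HGm s t Hst); lra. }
  exists x; split; [exact Hx|split].
  - apply continuity_pt_mono_summand with G; auto.
  - apply continuity_pt_mono_summand with F; auto.
    apply continuity_pt_of_ball; intros eps He.
    destruct (continuity_pt_ball _ _ Hc eps He) as [d [Hd H]].
    exists d; split; auto. intros y Hy; specialize (H y Hy). solve_Rabs.
Qed.

Lemma Dplus_continuity_pt_dense F a b : Dplus F -> a < b -> exists x, a < x < b /\ continuity_pt F x.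
Proof.
  intros HF Hab. destruct (Dplus_common_continuity_pt F F a b HF HF Hab) as [x [? [? _]]]. eauto.
Qed.

(** * Weak convergence *)

(* Pointwise inequalities survive weak limits: both limits are compared at common continuity
   points arbitrarily close to the left of t, and left continuity does the rest. *)
Lemma wconv_fle (Fn Gn : nat -> DF) F G N : Dplus F -> Dplus G -> wconv Fn F -> wconv Gn G ->
  (forall n, (N <= n)%nat -> fle (Fn n) (Gn n)) -> fle F G.
Proof.
  intros HF HG HFn HGn Hle t. apply Rnot_lt_le; intros Hc.
  destruct (Dplus_left_continuous F HF t ((F t - G t)/2)) as [d [Hd Hdel]]; [lra|].
  destruct (Dplus_common_continuity_pt F G (t - d) t HF HG) as [u [Hu [HcF HcG]]]; [lra|].
  assert (F u <= G u).
  { apply (Un_cv_le_eventually _ _ _ _ N (HFn u HcF) (HGn u HcG)). intros n Hn; apply Hle; auto. }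
  specialize (Hdel u Hu). pose proof (Dplus_mono G u t HG ltac:(lra)). solve_Rabs.
Qed.

Lemma wconv_unique (Fn : nat -> DF) F F' : Dplus F -> Dplus F' -> wconv Fn F -> wconv Fn F' -> F = F'.
Proof. intros. apply fle_antisym; apply (wconv_fle Fn Fn _ _ 0); auto using fle_refl. Qed.

Lemma wconv_const F : wconv (fun _ => F) F.
Proof. intros t _. apply Un_cv_const. Qed.

Lemma wconv_eventually_eq (Fn Gn : nat -> DF) F N :
  (forall n, (N <= n)%nat -> Fn n = Gn n) -> wconv Fn F -> wconv Gn F.
Proof.
  intros He H t Ht eps Heps. destruct (H t Ht eps Heps) as [N1 H1]. exists (N + N1)%nat.
  intros n Hn. rewrite <- He by lia. apply H1. lia.
Qed.

Lemma wconv_subseq (Fn : nat -> DF) F (phi : nat -> nat) :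
  wconv Fn F -> (forall j, (j <= phi j)%nat) -> wconv (fun j => Fn (phi j)) F.
Proof. intros H Hp t Ht. apply (Un_cv_subseq (fun n => Fn n t)); auto. Qed.

Lemma wconv_shift (Fn : nat -> DF) F N : wconv Fn F -> wconv (fun n => Fn (n - N)%nat) F.
Proof.
  intros H t Ht eps He. destruct (H t Ht eps He) as [M HM]. exists (M + N)%nat.
  intros n Hn. apply HM. lia.
Qed.

Lemma H0_continuity_pt t : 0 < t -> continuity_pt H0 t.
Proof.
  intros Ht. apply continuity_pt_of_ball. intros eps He. exists t. split; auto. intros y Hy.
  rewrite !H0_pos by solve_Rabs. solve_Rabs.
Qed.

Lemma wconv_H0_intro (Fn : nat -> DF) : (forall n, Dplus (Fn n)) ->
  (forall t, 0 < t -> forall eps, 0 < eps -> exists N, forall n, (N <= n)%nat -> 1 - eps < Fn n t) ->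
  wconv Fn H0.
Proof.
  intros HD H t _ eps He. unfold Rdist. destruct (Rle_dec t 0) as [Ht|Ht].
  - exists 0%nat. intros n _. rewrite H0_nonpos, (Dplus_nonpos (Fn n) t); auto. solve_Rabs.
  - destruct (H t ltac:(lra) eps He) as [N HN]. exists N. intros n Hn.
    specialize (HN n Hn). pose proof (Dplus_le1 (Fn n) t (HD n)). rewrite H0_pos by lra. solve_Rabs.
Qed.

Lemma wconv_H0_elim (Fn : nat -> DF) : wconv Fn H0 ->
  forall t, 0 < t -> forall eps, 0 < eps -> exists N, forall n, (N <= n)%nat -> 1 - eps < Fn n t.
Proof.
  intros H t Ht eps He. destruct (H t (H0_continuity_pt t Ht) eps He) as [N HN]. exists N.
  intros n Hn. specialize (HN n Hn). unfold Rdist in HN. rewrite H0_pos in HN by lra. solve_Rabs.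
Qed.

Lemma wconv_H0_fle (Yn Xn : nat -> DF) N : (forall n, Dplus (Xn n)) ->
  (forall n, (N <= n)%nat -> fle (Yn n) (Xn n)) -> wconv Yn H0 -> wconv Xn H0.
Proof.
  intros HX Hle HY. apply wconv_H0_intro; auto. intros t Ht eps He.
  destruct (wconv_H0_elim Yn HY t Ht eps He) as [N1 H1]. exists (N + N1)%nat. intros n Hn.
  specialize (H1 n ltac:(lia)). specialize (Hle n ltac:(lia) t). lra.
Qed.

Lemma wconv_fsup {I : Type} (H : I -> DF) (Xn : nat -> DF) :
  (forall i, Dplus (H i)) -> (forall n, Dplus (Xn n)) -> (forall n, fle (Xn n) (fsup H)) ->
  (forall i, exists Yn : nat -> DF, (forall n, Dplus (Yn n)) /\ wconv Yn (H i) /\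
                                    forall n, fle (Yn n) (Xn n)) ->
  wconv Xn (fsup H).
Proof.
  intros HH HX Hup Hlow t _ eps He. unfold Rdist.
  destruct (Dplus_left_continuous _ (Dplus_fsup H HH) t (eps/3)) as [d [Hd Hdel]]; [lra|].
  specialize (Hdel (t - d/2) ltac:(lra)).
  destruct (fsup_approx H HH (t - d/2) (eps/3)) as [Hsmall|[i Hi]]; [lra| |].
  - exists 0%nat. intros n _. pose proof (Hup n t). pose proof (Dplus_ge0 _ t (HX n)). solve_Rabs.
  - destruct (Hlow i) as [Yn [HY [HYc HYX]]].
    destruct (Dplus_continuity_pt_dense (H i) (t - d/2) t (HH i)) as [u [Hu Hcu]]; [lra|].
    destruct (HYc u Hcu (eps/3)) as [N HN]; [lra|]. exists N. intros n Hn.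
    specialize (HN n Hn). unfold Rdist in HN. pose proof (HYX n u). pose proof (Hup n t).
    pose proof (Dplus_mono _ u t (HX n) ltac:(lra)).
    pose proof (Dplus_mono _ (t - d/2) u (HH i) ltac:(lra)).
    solve_Rabs.
Qed.

(** * Helly's selection theorem *)

Definition dense_seq (n : nat) : R :=
  let (m, i) := Cantor.of_nat n in INR i / (INR m + 1) - INR m.

Lemma dense_seq_dense s t : s < t -> exists n, s < dense_seq n < t.
Proof.
  intros Hst.
  destruct (archimed (Rmax (/(t - s)) (- s))) as [Hu _].
  set (m := Z.to_nat (up (Rmax (/(t - s)) (- s)))).
  pose proof (Rmax_l (/(t-s)) (-s)). pose proof (Rmax_r (/(t-s)) (-s)).
  assert (0 < /(t-s)) by (apply Rinv_0_lt_compat; lra).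
  assert (Hm : Rmax (/(t-s)) (-s) < INR m).
  { unfold m. rewrite INR_IZR_INZ, Z2Nat.id; [lra|]. apply le_IZR. lra. }
  assert (HM : 0 < INR m + 1) by (pose proof (pos_INR m); lra).
  destruct (archimed ((s + INR m) * (INR m + 1))) as [Hz1 Hz2].
  set (i := Z.to_nat (up ((s + INR m) * (INR m + 1)))).
  assert (Hi : INR i = IZR (up ((s + INR m) * (INR m + 1)))).
  { unfold i. rewrite INR_IZR_INZ, Z2Nat.id; auto. apply le_IZR.
    assert (0 < (s + INR m) * (INR m + 1)) by (apply Rmult_lt_0_compat; lra). lra. }
  exists (Cantor.to_nat (m, i)). unfold dense_seq. rewrite Cantor.cancel_of_to.
  assert (Hstep : / (INR m + 1) < t - s).
  { rewrite <- (Rinv_inv (t - s)). apply Rinv_lt_contravar; [apply Rmult_lt_0_compat|]; lra. }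
  split.
  - apply Rle_lt_trans with ((s + INR m) * (INR m + 1) / (INR m + 1) - INR m).
    + right. field. lra.
    + unfold Rdiv. apply Rplus_lt_compat_r. apply Rmult_lt_compat_r; [apply Rinv_0_lt_compat|]; lra.
  - apply Rle_lt_trans with (((s + INR m) * (INR m + 1) + 1) / (INR m + 1) - INR m).
    + unfold Rdiv. apply Rplus_le_compat_r.
      apply Rmult_le_compat_r; [left; apply Rinv_0_lt_compat|]; lra.
    + replace (((s + INR m) * (INR m + 1) + 1) / (INR m + 1) - INR m) with (s + /(INR m + 1))
        by (field; lra). lra.
Qed.

Definition increasing (phi : nat -> nat) : Prop := forall j, (phi j < phi (S j))%nat.

Lemma increasing_lt phi a b : increasing phi -> (a < b)%nat -> (phi a < phi b)%nat.
Proof. intros H Hab. induction Hab; [apply H|]. specialize (H m). lia. Qed.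

Lemma increasing_ge phi j : increasing phi -> (j <= phi j)%nat.
Proof. intros H. induction j; [lia|]. specialize (H j). lia. Qed.

(* The extraction is stated for every sequence, so that it can be chosen before knowing that
   the sequence is bounded. *)
Lemma unit_interval_subseq_cv (u : nat -> R) : exists phi, increasing phi /\
  ((forall n, 0 <= u n <= 1) -> exists l, Un_cv (fun j => u (phi j)) l).
Proof.
  destruct (classic (forall n, 0 <= u n <= 1)) as [Hb|Hb].
  2:{ exists (fun j => j). split; [intros j; lia|tauto]. }
  destruct (Bolzano_Weierstrass u (fun c => 0 <= c <= 1) (compact_P3 0 1) Hb) as [l Hl].
  assert (Hnear : forall N k, exists p, (N <= p)%nat /\ Rabs (u p - l) < / (INR k + 1)).
  { intros N k.
    assert (Hpos : 0 < / (INR k + 1)) by (apply Rinv_0_lt_compat; pose proof (pos_INR k); lra).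
    destruct (Hl (disc l (mkposreal _ Hpos)) N) as [p [Hp Hd]].
    - exists (mkposreal _ Hpos). intros y Hy; exact Hy.
    - exists p; split; auto. }
  assert (Hnext : exists next : nat -> nat -> nat,
             forall N k, (N <= next N k)%nat /\ Rabs (u (next N k) - l) < / (INR k + 1)).
  { apply (choice (fun N (f : nat -> nat) =>
             forall k, (N <= f k)%nat /\ Rabs (u (f k) - l) < / (INR k + 1))).
    intros N. exact (choice _ (Hnear N)). }
  destruct Hnext as [next Hnext].
  set (phi := fix phi j := match j with O => next O O | S j => next (S (phi j)) (S j) end).
  exists phi. split.
  - intros j. simpl. destruct (Hnext (S (phi j)) (S j)). lia.
  - intros _. exists l. intros eps He. destruct (inv_INR_small eps He) as [k Hk]. exists k.
    intros j Hj. specialize (Hk j Hj). unfold Rdist. destruct j as [|j]; simpl.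
    + destruct (Hnext 0%nat 0%nat) as [_ H]. lra.
    + destruct (Hnext (S (phi j)) (S j)) as [_ H]. lra.
Qed.

Section Helly.
Variable Fs : nat -> DF.
Hypothesis HFs : forall n, Dplus (Fs n).

Definition cv_extraction (u : nat -> R) : nat -> nat :=
  proj1_sig (constructive_indefinite_description _ (unit_interval_subseq_cv u)).

Lemma cv_extraction_spec u : increasing (cv_extraction u) /\
  ((forall n, 0 <= u n <= 1) -> exists l, Un_cv (fun j => u (cv_extraction u j)) l).
Proof. exact (proj2_sig (constructive_indefinite_description _ (unit_interval_subseq_cv u))). Qed.

(* [extraction k] makes [Fs] converge at the first [k] points of [dense_seq]. *)
Fixpoint extraction (k : nat) : nat -> nat :=
  match k with
  | O => fun n => n
  | S k => fun n => extraction k (cv_extraction (fun m => Fs (extraction k m) (dense_seq k)) n)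
  end.

Lemma extraction_increasing k : increasing (extraction k).
Proof.
  induction k as [|k IH]; intros j; simpl; [lia|].
  apply increasing_lt; auto. apply cv_extraction_spec.
Qed.

Lemma extraction_refines k j : (k <= j)%nat ->
  forall n, exists m, (n <= m)%nat /\ extraction j n = extraction k m.
Proof.
  intros Hkj. induction Hkj as [|j Hkj IH]; intros n; [exists n; split; auto|].
  simpl. set (e := cv_extraction _).
  destruct (IH (e n)) as [m [Hm Hm']]. exists m; split; auto.
  pose proof (increasing_ge _ n
    (proj1 (cv_extraction_spec (fun m => Fs (extraction j m) (dense_seq j))))).
  fold e in H. lia.
Qed.

Lemma extraction_cv k : exists l, Un_cv (fun m => Fs (extraction (S k) m) (dense_seq k)) l.
Proof.
  apply (cv_extraction_spec (fun m => Fs (extraction k m) (dense_seq k))).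
  intros n; split; [apply Dplus_ge0|apply Dplus_le1]; auto.
Qed.

Definition diagonal (j : nat) : nat := extraction (S j) j.

Lemma diagonal_increasing : increasing diagonal.
Proof.
  intros j. unfold diagonal.
  change (extraction (S (S j)) (S j)) with
    (extraction (S j) (cv_extraction (fun m => Fs (extraction (S j) m) (dense_seq (S j))) (S j))).
  apply increasing_lt; [apply extraction_increasing|].
  pose proof (increasing_ge _ (S j)
    (proj1 (cv_extraction_spec (fun m => Fs (extraction (S j) m) (dense_seq (S j)))))).
  lia.
Qed.

Lemma diagonal_cv k : exists l, Un_cv (fun j => Fs (diagonal j) (dense_seq k)) l.
Proof.
  destruct (extraction_cv k) as [l Hl]. exists l. intros eps He. destruct (Hl eps He) as [N HN].
  exists (S k + N)%nat. intros j Hj. unfold diagonal.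
  destruct (extraction_refines (S k) (S j) ltac:(lia) j) as [m [Hm ->]]. apply HN. lia.
Qed.

Definition diagonal_limit (k : nat) : R :=
  proj1_sig (constructive_indefinite_description _ (diagonal_cv k)).

Lemma diagonal_limit_spec k : Un_cv (fun j => Fs (diagonal j) (dense_seq k)) (diagonal_limit k).
Proof. exact (proj2_sig (constructive_indefinite_description _ (diagonal_cv k))). Qed.

Lemma diagonal_limit_bounds k : 0 <= diagonal_limit k <= 1.
Proof.
  split.
  - apply (Un_cv_le_eventually (fun _ => 0) _ _ _ 0 (Un_cv_const 0) (diagonal_limit_spec k)).
    intros; apply Dplus_ge0; auto.
  - apply (Un_cv_le_eventually _ (fun _ => 1) _ _ 0 (diagonal_limit_spec k) (Un_cv_const 1)).
    intros; apply Dplus_le1; auto.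
Qed.

(* The left-continuous interpolation of the limits at the points of [dense_seq]. *)
Definition helly_limit (t : R) : R :=
  Rsup (fun y => exists k, dense_seq k < t /\ y = diagonal_limit k).

Let helly_values_le1 t : forall y, (exists k, dense_seq k < t /\ y = diagonal_limit k) -> y <= 1.
Proof. intros y [k [_ ->]]. apply diagonal_limit_bounds. Qed.

Lemma helly_limit_ub k t : dense_seq k < t -> diagonal_limit k <= helly_limit t.
Proof. intros H. apply (Rsup_ub _ 1); [apply helly_values_le1|eauto]. Qed.

Lemma helly_limit_ge0 t : 0 <= helly_limit t.
Proof. apply (Rsup_ge0 _ 1), helly_values_le1. Qed.

Lemma helly_limit_least t M : (forall k, dense_seq k < t -> diagonal_limit k <= M) -> 0 <= M ->
  helly_limit t <= M.
Proof. intros H HM. apply Rsup_least; auto. intros y [k [Hk ->]]; auto. Qed.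

Lemma helly_limit_mono s t : s <= t -> helly_limit s <= helly_limit t.
Proof.
  intros Hst. apply helly_limit_least; [|apply helly_limit_ge0].
  intros k Hk. apply helly_limit_ub. lra.
Qed.

Lemma helly_limit_approx t eps : 0 < eps ->
  helly_limit t - eps < 0 \/ exists k, dense_seq k < t /\ helly_limit t - eps < diagonal_limit k.
Proof.
  intros He. destruct (Rsup_approx _ 1 eps (helly_values_le1 t) He) as [H|[y [[k [Hk ->]] Hy]]]; eauto.
Qed.

Lemma Dplus_helly_limit : Dplus helly_limit.
Proof.
  split; [|split; [|split]].
  - intros t; split; [apply helly_limit_ge0|]. apply helly_limit_least; [|lra].
    intros; apply diagonal_limit_bounds.
  - apply helly_limit_mono.
  - intros t eps He. destruct (helly_limit_approx t eps He) as [H|[k [Hk1 Hk2]]].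
    + exists 1; split; [lra|]. intros s Hs.
      pose proof (helly_limit_mono s t ltac:(lra)). pose proof (helly_limit_ge0 s). solve_Rabs.
    + exists (t - dense_seq k); split; [lra|]. intros s Hs.
      pose proof (helly_limit_mono s t ltac:(lra)). pose proof (helly_limit_ub k s ltac:(lra)).
      solve_Rabs.
  - apply Rle_antisym; [|apply helly_limit_ge0]. apply helly_limit_least; [|lra]. intros k Hk.
    apply (Un_cv_le_eventually _ (fun _ => 0) _ _ 0 (diagonal_limit_spec k) (Un_cv_const 0)).
    intros n _. rewrite Dplus_nonpos; auto; lra.
Qed.

Lemma helly_limit_wconv : wconv (fun j => Fs (diagonal j)) helly_limit.
Proof.
  intros t Hc eps He. destruct (continuity_pt_ball _ _ Hc (eps/4)) as [d [Hd Hdel]]; [lra|].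
  assert (Hlow : exists N1, forall j, (N1 <= j)%nat -> helly_limit t - eps < Fs (diagonal j) t).
  { destruct (helly_limit_approx (t - d/2) (eps/4)) as [H|[k [Hk1 Hk2]]]; [lra| |].
    - exists 0%nat. intros j _. specialize (Hdel (t - d/2) ltac:(solve_Rabs)).
      pose proof (Dplus_ge0 (Fs (diagonal j)) t (HFs _)). solve_Rabs.
    - destruct (diagonal_limit_spec k (eps/4)) as [N1 HN1]; [lra|]. exists N1. intros j Hj.
      specialize (HN1 j Hj). unfold Rdist in HN1. specialize (Hdel (t - d/2) ltac:(solve_Rabs)).
      pose proof (Dplus_mono (Fs (diagonal j)) (dense_seq k) t (HFs _) ltac:(lra)). solve_Rabs. }
  assert (Hup : exists N2, forall j, (N2 <= j)%nat -> Fs (diagonal j) t < helly_limit t + eps).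
  { destruct (dense_seq_dense t (t + d/2)) as [k [Hk1 Hk2]]; [lra|].
    destruct (dense_seq_dense (dense_seq k) (t + d/2)) as [k' [Hk1' Hk2']]; [lra|].
    pose proof (helly_limit_ub k (dense_seq k') Hk1').
    specialize (Hdel (dense_seq k') ltac:(solve_Rabs)).
    destruct (diagonal_limit_spec k (eps/4)) as [N2 HN2]; [lra|]. exists N2. intros j Hj.
    specialize (HN2 j Hj). unfold Rdist in HN2.
    pose proof (Dplus_mono (Fs (diagonal j)) t (dense_seq k) (HFs _) ltac:(lra)). solve_Rabs. }
  destruct Hlow as [N1 H1], Hup as [N2 H2]. exists (N1 + N2)%nat. intros j Hj. unfold Rdist.
  specialize (H1 j ltac:(lia)); specialize (H2 j ltac:(lia)). solve_Rabs.
Qed.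

End Helly.

Theorem Helly_selection (Fs : nat -> DF) : (forall n, Dplus (Fs n)) ->
  exists phi, increasing phi /\ exists F, Dplus F /\ wconv (fun j => Fs (phi j)) F.
Proof.
  intros H. exists (diagonal Fs). split; [apply diagonal_increasing|].
  exists (helly_limit Fs H). split; [apply Dplus_helly_limit; auto|apply helly_limit_wconv; auto].
Qed.

(* [Cauchy_seq G D z] is [wCauchy (fun n p => D (z n) (z p))]. *)
Definition wCauchy (E : nat -> nat -> DF) : Prop :=
  forall t, continuity_pt H0 t -> forall eps, 0 < eps ->
    exists N, forall n p, (N <= n)%nat -> (N <= p)%nat -> Rabs (E n p t - H0 t) < eps.

Lemma wCauchy_wconv E nj pj : wCauchy E ->
  (forall j, (j <= nj j)%nat) -> (forall j, (j <= pj j)%nat) -> wconv (fun j => E (nj j) (pj j)) H0.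
Proof.
  intros HE Hn Hp t Ht eps He. destruct (HE t Ht eps He) as [N HN]. exists N. intros j Hj.
  apply HN; [specialize (Hn j)|specialize (Hp j)]; lia.
Qed.

Lemma wCauchy_of_wconv E : (forall n p, Dplus (E n p)) ->
  (forall nj pj, (forall j, (j <= nj j)%nat) -> (forall j, (j <= pj j)%nat) ->
     wconv (fun j => E (nj j) (pj j)) H0) -> wCauchy E.
Proof.
  intros HD H t Ht eps He. destruct (Rle_dec t 0) as [Ht0|Ht0].
  { exists 0%nat. intros. rewrite (H0_nonpos t Ht0), (Dplus_nonpos (E n p) t (HD n p) Ht0). solve_Rabs. }
  apply NNPP; intros Hn.
  assert (Hbad : forall N, exists np, (N <= fst np)%nat /\ (N <= snd np)%nat /\
                                      eps <= Rabs (E (fst np) (snd np) t - H0 t)).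
  { intros N. apply NNPP; intros H1. apply Hn. exists N. intros n p Hnn Hpp.
    apply Rnot_le_lt. intros H2. apply H1. exists (n, p). simpl; auto. }
  destruct (choice _ Hbad) as [np Hnp].
  destruct (H (fun j => fst (np j)) (fun j => snd (np j)) (fun j => proj1 (Hnp j))
              (fun j => proj1 (proj2 (Hnp j))) t Ht eps He) as [N HN].
  specialize (HN N (le_n N)). destruct (Hnp N) as [_ [_ Hc]]. unfold Rdist in HN. lra.
Qed.

Section TriangleFunction.
Variable star : DF -> DF -> DF.
Hypothesis Htf : triangle_function star.

Lemma Dplus_star F L : Dplus F -> Dplus L -> Dplus (star F L).
Proof. apply Htf. Qed.

Lemma star_comm F L : Dplus F -> Dplus L -> star F L = star L F.
Proof. apply Htf. Qed.

Lemma star_assoc F L M : Dplus F -> Dplus L -> Dplus M -> star (star F L) M = star F (star L M).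
Proof. apply Htf. Qed.

Lemma star_mono_l F F' L : Dplus F -> Dplus F' -> Dplus L -> fle F F' -> fle (star F L) (star F' L).
Proof. apply Htf. Qed.

Lemma star_mono_r F L L' : Dplus F -> Dplus L -> Dplus L' -> fle L L' -> fle (star F L) (star F L').
Proof. apply Htf. Qed.

Lemma star_H0_r F : Dplus F -> star F H0 = F.
Proof. apply Htf. Qed.

Lemma star_H0_l F : Dplus F -> star H0 F = F.
Proof. intros. rewrite star_comm by auto using Dplus_H0. apply star_H0_r; auto. Qed.

Lemma star_Hinf_l F : Dplus F -> star Hinf F = Hinf.
Proof.
  intros HF. apply fle_antisym; [|apply Hinf_fle, Dplus_star; auto using Dplus_Hinf].
  rewrite <- (star_H0_r Hinf) at 2 by apply Dplus_Hinf.
  apply star_mono_r; auto using Dplus_Hinf, Dplus_H0, fle_H0.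
Qed.

Lemma star_Hinf_r F : Dplus F -> star F Hinf = Hinf.
Proof. intros HF. rewrite star_comm by auto using Dplus_Hinf. apply star_Hinf_l; auto. Qed.

Hypothesis Hcont : star_continuous star.

Lemma wconv_star_H0_l (Fn Ln : nat -> DF) L : (forall n, Dplus (Fn n)) -> (forall n, Dplus (Ln n)) ->
  Dplus L -> wconv Fn H0 -> wconv Ln L -> wconv (fun n => star (Fn n) (Ln n)) L.
Proof. intros. rewrite <- (star_H0_l L) by auto. apply Hcont; auto using Dplus_H0. Qed.

Section LipschitzFamily.
Variables (Fn : nat -> DF) (E : nat -> nat -> DF).
Hypotheses (HFn : forall n, Dplus (Fn n)) (HE : forall n m, Dplus (E n m)).
Hypothesis E_Lip : forall n m, fle (star (E n m) (Fn m)) (Fn n).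
Hypothesis E_Cauchy : wCauchy E.

Lemma Lip_subseq_wlim_fle (alpha beta : nat -> nat) F1 F2 : Dplus F1 -> Dplus F2 ->
  (forall j, (j <= alpha j)%nat) -> (forall j, (j <= beta j)%nat) ->
  wconv (fun j => Fn (alpha j)) F1 -> wconv (fun j => Fn (beta j)) F2 -> fle F2 F1.
Proof.
  intros HF1 HF2 Ha Hb H1 H2.
  apply (wconv_fle (fun j => star (E (alpha j) (beta j)) (Fn (beta j))) (fun j => Fn (alpha j)) _ _ 0);
    auto.
  apply wconv_star_H0_l; auto. apply wCauchy_wconv; auto.
Qed.

(* Helly yields a weakly convergent subsequence; two subsequential limits coincide by
   [Lip_subseq_wlim_fle], so a subsequence staying away from the limit at a continuity point
   is absurd. *)
Lemma Lip_Cauchy_wconv : exists F, Dplus F /\ wconv Fn F.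
Proof.
  destruct (Helly_selection Fn HFn) as [phi [Hphi [F [HF HFc]]]].
  exists F; split; auto. intros t Ht.
  destruct (classic (Un_cv (fun n => Fn n t) (F t))) as [|Hn]; auto. exfalso.
  destruct (not_Un_cv_subseq _ _ Hn) as [eps [He [ps Hps]]].
  destruct (Helly_selection (fun j => Fn (ps j)) (fun j => HFn _)) as [chi [Hchi [F' [HF' HF'c]]]].
  assert (Hge1 : forall j, (j <= phi j)%nat) by (intros; apply increasing_ge; auto).
  assert (Hge2 : forall j, (j <= ps (chi j))%nat).
  { intros j. pose proof (increasing_ge chi j Hchi). pose proof (proj1 (Hps (chi j))). lia. }
  assert (F' = F) as ->.
  { apply fle_antisym.
    - apply (Lip_subseq_wlim_fle phi (fun j => ps (chi j))); auto.
    - apply (Lip_subseq_wlim_fle (fun j => ps (chi j)) phi); auto. }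
  destruct (HF'c t Ht eps He) as [N HN]. specialize (HN N (le_n N)).
  destruct (Hps (chi N)) as [_ Hfar]. lra.
Qed.

End LipschitzFamily.

(** * The probabilistic metric space of Lipschitz maps *)

Section PMSpace.
Variables (G : Type) (D : G -> G -> DF).
Hypothesis D_Dplus : forall p q, Dplus (D p q).
Hypothesis D_eq_H0 : forall p q, D p q = H0 <-> p = q.
Hypothesis D_sym : forall p q, D p q = D q p.
Hypothesis D_triangle : forall p q r, fle (star (D p q) (D q r)) (D p r).

Local Notation Lip := (isLip G D star).
Local Notation Pi := (inPi G D star).
Local Notation DD := (DD G star).

Lemma D_refl p : D p p = H0.
Proof. apply D_eq_H0; reflexivity. Qed.

Lemma Lip_Dplus f x : Lip f -> Dplus (f x).
Proof. intros [H _]; auto. Qed.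

Lemma Lip_le f x y : Lip f -> fle (star (D x y) (f y)) (f x).
Proof. intros [_ H]; auto. Qed.

Lemma Pi_Lip f : Pi f -> Lip f.
Proof. intros [H _]; auto. Qed.

#[local] Hint Resolve Dplus_star Dplus_H0 Dplus_Hinf D_Dplus Lip_Dplus Pi_Lip : dplus.

Definition represents (a : nat -> G) (f : G -> DF) : Prop :=
  Cauchy_seq G D a /\ forall x, wconv (fun n => D (a n) x) (f x).

Lemma represents_Pi f : Pi f -> exists a, represents a f.
Proof. intros [_ Ha]; exact Ha. Qed.

Lemma represents_wconv_H0 f a : Lip f -> represents a f -> wconv (fun n => f (a n)) H0.
Proof.
  intros HL [Ha Hc]. apply wconv_H0_intro; [auto with dplus|]. intros t Ht eps He.
  destruct (Ha (t/2) (H0_continuity_pt (t/2) ltac:(lra)) (eps/2) ltac:(lra)) as [N HN].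
  exists N. intros n Hn.
  destruct (Dplus_continuity_pt_dense (f (a n)) (t/2) t) as [u [Hu Hcu]]; auto with dplus; [lra|].
  assert (1 - eps/2 <= f (a n) u).
  { apply (Un_cv_le_eventually (fun _ => 1 - eps/2) _ _ _ N (Un_cv_const _) (Hc (a n) u Hcu)).
    intros p Hp. specialize (HN p n Hp Hn). rewrite H0_pos in HN by lra.
    pose proof (Dplus_mono (D (a p) (a n)) (t/2) u (D_Dplus _ _) ltac:(lra)). solve_Rabs. }
  pose proof (Dplus_mono (f (a n)) u t (Lip_Dplus _ _ HL) ltac:(lra)). lra.
Qed.

Lemma Pi_star_le_D f x y : Pi f -> fle (star (f x) (f y)) (D x y).
Proof.
  intros [HL [a [Ha Hc]]].
  apply (wconv_fle (fun n => star (D (a n) x) (D (a n) y)) (fun _ => D x y) _ _ 0);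
    auto using wconv_const with dplus.
  intros n _. rewrite (D_sym (a n) x). apply D_triangle.
Qed.

Lemma Dplus_DD f g : Lip f -> Lip g -> Dplus (DD f g).
Proof. intros. apply Dplus_fsup. auto with dplus. Qed.

Lemma DD_ub f g x : Lip f -> Lip g -> fle (star (f x) (g x)) (DD f g).
Proof. intros Hf Hg t. apply (fsup_ub (fun x => star (f x) (g x))). auto with dplus. Qed.

Lemma DD_comm f g : Lip f -> Lip g -> DD f g = DD g f.
Proof.
  intros Hf Hg. unfold Defs.DD. f_equal. apply functional_extensionality. intros x.
  apply star_comm; auto with dplus.
Qed.

#[local] Hint Resolve Dplus_DD : dplus.

(* Along a sequence generating [f], [g (a k)] is bounded below by [star (D (a k) x) (g x)]. *)
Lemma DD_wlim f g a : Lip f -> Lip g -> represents a f ->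
  wconv (fun k => star (f (a k)) (g (a k))) (DD f g).
Proof.
  intros Hf Hg Ha. apply wconv_fsup; auto with dplus.
  - intros k. apply DD_ub; auto.
  - intros x. exists (fun k => star (f (a k)) (star (D (a k) x) (g x))). split; [|split].
    + auto with dplus.
    + apply wconv_star_H0_l; auto with dplus.
      * apply represents_wconv_H0; auto.
      * apply Hcont; auto using wconv_const with dplus. apply Ha.
    + intros k. apply star_mono_r; auto with dplus. apply Lip_le; auto.
Qed.

Lemma DD_star_le f g y : Pi f -> Pi g -> fle (star (DD f g) (g y)) (f y).
Proof.
  intros Hf Hg. pose proof (Pi_Lip _ Hf) as HLf. pose proof (Pi_Lip _ Hg) as HLg.
  destruct (represents_Pi f Hf) as [a Ha].
  apply (wconv_fle (fun k => star (star (f (a k)) (g (a k))) (g y)) (fun _ => f y) _ _ 0);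
    auto using wconv_const with dplus.
  - apply Hcont; auto using wconv_const, DD_wlim with dplus.
  - intros k _. set (x := a k).
    rewrite star_assoc by auto with dplus.
    apply fle_trans with (star (f x) (D x y)).
    + apply star_mono_r; auto with dplus. apply Pi_star_le_D; auto.
    + rewrite star_comm, D_sym by auto with dplus. apply Lip_le; auto.
Qed.

Lemma DD_self f : Pi f -> DD f f = H0.
Proof.
  intros Hf. destruct (represents_Pi f Hf) as [a Ha].
  apply (wconv_unique (fun k => star (f (a k)) (f (a k)))); auto using DD_wlim with dplus.
  apply wconv_star_H0_l; auto using represents_wconv_H0 with dplus.
Qed.

Lemma DD_eq_H0 f g : Pi f -> Pi g -> DD f g = H0 -> f = g.
Proof.
  intros Hf Hg H. apply functional_extensionality. intros y. apply fle_antisym.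
  - pose proof (DD_star_le g f y Hg Hf) as Hle.
    rewrite DD_comm, H, star_H0_l in Hle; auto with dplus.
  - pose proof (DD_star_le f g y Hf Hg) as Hle. rewrite H, star_H0_l in Hle; auto with dplus.
Qed.

Lemma DD_triangle f g h : Pi f -> Pi g -> Pi h -> fle (star (DD f g) (DD g h)) (DD f h).
Proof.
  intros Hf Hg Hh.
  destruct (represents_Pi f Hf) as [a Ha], (represents_Pi h Hh) as [c Hc].
  apply (wconv_fle (fun k => star (star (f (a k)) (g (a k))) (star (h (c k)) (g (c k))))
           (fun _ => DD f h) _ _ 0); auto using wconv_const with dplus.
  - rewrite (DD_comm g h) by auto with dplus. apply Hcont; auto using DD_wlim with dplus.
  - intros k _. set (x := a k). set (y := c k).
    rewrite (star_comm (h y) (g y)), star_assoc, <- (star_assoc (g x) (g y) (h y)) by auto with dplus.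
    apply fle_trans with (star (f x) (h x)); [|apply DD_ub; auto with dplus].
    apply star_mono_r; auto with dplus.
    apply fle_trans with (star (D x y) (h y)); [|apply Lip_le; auto with dplus].
    apply star_mono_l; auto using Pi_star_le_D with dplus.
Qed.


Lemma Cauchy_seq_represents a : Cauchy_seq G D a -> exists f, Pi f /\ represents a f.
Proof.
  intros Ha.
  assert (Hlim : forall x, exists F, Dplus F /\ wconv (fun n => D (a n) x) F).
  { intros x. apply (Lip_Cauchy_wconv (fun n => D (a n) x) (fun n m => D (a n) (a m))); auto. }
  destruct (choice _ Hlim) as [f Hf].
  assert (HfD : forall x, Dplus (f x)) by apply Hf.
  assert (HL : Lip f).
  { split; auto. intros x y.
    apply (wconv_fle (fun n => star (D x y) (D (a n) y)) (fun n => D (a n) x) _ _ 0);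
      try apply Hf; auto with dplus.
    - apply Hcont; auto using wconv_const with dplus; apply Hf.
    - intros n _. rewrite (D_sym (a n) y), (D_sym (a n) x). apply D_triangle. }
  exists f. split; [split; [exact HL|exists a]|]; split; auto; intros x; apply Hf.
Qed.

Section Completeness.
Variable g : nat -> G -> DF.
Hypothesis g_Pi : forall n, Pi (g n).
Hypothesis g_Cauchy : wCauchy (fun n m => DD (g n) (g m)).

#[local] Hint Resolve g_Pi : dplus.

Lemma Pi_points_wconv_H0 : exists c, wconv (fun n => g n (c n)) H0.
Proof.
  assert (Hex : forall n, exists x, 1 - / (INR n + 1) < g n x (/ (INR n + 1))).
  { intros n. destruct (represents_Pi (g n) (g_Pi n)) as [a Ha].
    assert (Hp : 0 < / (INR n + 1)) by (apply Rinv_0_lt_compat; pose proof (pos_INR n); lra).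
    destruct (wconv_H0_elim _ (represents_wconv_H0 (g n) a (Pi_Lip _ (g_Pi n)) Ha) _ Hp _ Hp) as [N HN].
    exists (a N). apply HN; auto. }
  destruct (choice _ Hex) as [c Hc]. exists c.
  apply wconv_H0_intro; auto with dplus. intros t Ht eps He.
  destruct (inv_INR_small (Rmin t eps)) as [k Hk]; [apply Rmin_pos; auto|].
  exists k. intros n Hn. specialize (Hk n Hn). pose proof (Rmin_l t eps); pose proof (Rmin_r t eps).
  specialize (Hc n).
  pose proof (Dplus_mono (g n (c n)) (/ (INR n + 1)) t ltac:(auto with dplus) ltac:(lra)).
  lra.
Qed.

Variable c : nat -> G.
Hypothesis c_wconv : wconv (fun n => g n (c n)) H0.

Lemma points_Cauchy : Cauchy_seq G D c.
Proof.
  apply (wCauchy_of_wconv (fun n p => D (c n) (c p))); auto. intros nj pj Hn Hp.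
  apply (wconv_H0_fle (fun j => star (g (nj j) (c (nj j)))
                                   (star (DD (g (nj j)) (g (pj j))) (g (pj j) (c (pj j))))) _ 0);
    auto.
  - intros j _. set (n := nj j). set (p := pj j).
    apply fle_trans with (star (g n (c n)) (g n (c p))); [|apply Pi_star_le_D; auto].
    apply star_mono_r; auto with dplus. apply DD_star_le; auto.
  - apply wconv_star_H0_l; auto with dplus; [apply (wconv_subseq (fun n => g n (c n))); auto|].
    apply wconv_star_H0_l; auto with dplus; [apply (wCauchy_wconv (fun n m => DD (g n) (g m))); auto|].
    apply (wconv_subseq (fun n => g n (c n))); auto.
Qed.

Lemma Pi_complete_at f : Pi f -> represents c f -> wconv (fun n => DD (g n) f) H0.
Proof.
  intros Hf Hc. apply (wconv_H0_fle (fun n => star (g n (c n)) (f (c n))) _ 0); auto with dplus.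
  - intros n _. apply DD_ub; auto with dplus.
  - apply wconv_star_H0_l; auto with dplus. apply represents_wconv_H0; auto with dplus.
Qed.

End Completeness.

Lemma Pi_complete g : (forall n, Pi (g n)) -> wCauchy (fun n m => DD (g n) (g m)) ->
  exists f, Pi f /\ wconv (fun n => DD (g n) f) H0.
Proof.
  intros Hg HC. destruct (Pi_points_wconv_H0 g Hg) as [c Hc].
  destruct (Cauchy_seq_represents c (points_Cauchy g Hg HC c Hc)) as [f [Hf Hrep]].
  exists f. split; auto. eapply Pi_complete_at; eauto.
Qed.

Lemma Dbar_Pi f g : Pi f -> Pi g -> Dbar G D star f g = DD f g.
Proof. intros. unfold Dbar. destruct (excluded_middle_informative _); tauto. Qed.

Lemma Dbar_not_Pi f g : ~ (Pi f /\ Pi g) -> f <> g -> Dbar G D star f g = Hinf.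
Proof.
  intros H Hne. unfold Dbar.
  destruct (excluded_middle_informative _); [tauto|].
  destruct (excluded_middle_informative _); tauto.
Qed.

Lemma Dbar_self f : Dbar G D star f f = H0.
Proof.
  unfold Dbar. destruct (excluded_middle_informative _) as [[Hf _]|_]; [apply DD_self; auto|].
  destruct (excluded_middle_informative _); tauto.
Qed.

Lemma Dplus_Dbar f g : Lip f -> Lip g -> Dplus (Dbar G D star f g).
Proof.
  intros Hf Hg. destruct (classic (Pi f /\ Pi g)) as [[A B]|H].
  - rewrite Dbar_Pi by auto. auto with dplus.
  - destruct (classic (f = g)) as [<-|Hne].
    + rewrite Dbar_self. apply Dplus_H0.
    + rewrite Dbar_not_Pi by auto. apply Dplus_Hinf.
Qed.

Lemma Dbar_comm f g : Lip f -> Lip g -> Dbar G D star f g = Dbar G D star g f.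
Proof.
  intros Hf Hg. destruct (classic (Pi f /\ Pi g)) as [[A B]|H].
  - rewrite !Dbar_Pi by auto. apply DD_comm; auto.
  - destruct (classic (f = g)) as [<-|Hne]; [reflexivity|].
    rewrite !Dbar_not_Pi; auto; tauto.
Qed.

Lemma Dbar_eq_H0 f g : Dbar G D star f g = H0 -> f = g.
Proof.
  intros H. destruct (classic (Pi f /\ Pi g)) as [[A B]|Hn].
  - rewrite Dbar_Pi in H by auto. apply DD_eq_H0; auto.
  - apply NNPP; intros Hne. rewrite Dbar_not_Pi in H by auto. apply H0_neq_Hinf; auto.
Qed.

Lemma Dbar_triangle f g h : Lip f -> Lip g -> Lip h ->
  fle (star (Dbar G D star f g) (Dbar G D star g h)) (Dbar G D star f h).
Proof.
  intros Hf Hg Hh.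
  destruct (classic (f = g)) as [<-|Hfg].
  { rewrite Dbar_self, star_H0_l by (apply Dplus_Dbar; auto). apply fle_refl. }
  destruct (classic (g = h)) as [<-|Hgh].
  { rewrite Dbar_self, star_H0_r by (apply Dplus_Dbar; auto). apply fle_refl. }
  destruct (classic (Pi f /\ Pi g)) as [[A B]|H1].
  2:{ rewrite (Dbar_not_Pi f g), star_Hinf_l by auto using Dplus_Dbar.
      apply Hinf_fle, Dplus_Dbar; auto. }
  destruct (classic (Pi g /\ Pi h)) as [[_ C]|H2].
  2:{ rewrite (Dbar_not_Pi g h), star_Hinf_r by auto using Dplus_Dbar.
      apply Hinf_fle, Dplus_Dbar; auto. }
  rewrite !Dbar_Pi by auto. apply DD_triangle; auto.
Qed.

Lemma LipT_eq (f g : LipT G D star) : proj1_sig f = proj1_sig g -> f = g.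
Proof. destruct f as [f Hf], g as [g Hg]; simpl. intros ->. f_equal. apply proof_irrelevance. Qed.

Lemma LipT_PMspace : PMspace (LipT G D star) (DbarL G D star) star.
Proof.
  unfold DbarL. split; [exact Htf|split; [|split; [|split]]].
  - intros [f Hf] [g Hg]. apply Dplus_Dbar; auto.
  - intros f g. split; [intros H; apply LipT_eq, Dbar_eq_H0, H|intros ->; apply Dbar_self].
  - intros [f Hf] [g Hg]. apply Dbar_comm; auto.
  - intros [f Hf] [g Hg] [h Hh]. apply Dbar_triangle; auto.
Qed.


Lemma Dbar_near_H0_eq f g : Rabs (Dbar G D star f g 1 - H0 1) < 1/2 -> ~ (Pi f /\ Pi g) -> f = g.
Proof.
  intros Hnear Hnp. apply NNPP; intros Hne.
  rewrite Dbar_not_Pi, H0_pos in Hnear by (auto; lra). unfold Hinf in Hnear. solve_Rabs.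
Qed.

(* Off [Pi], [Dbar] is the discrete metric: a Cauchy sequence is either eventually constant or
   eventually in [Pi]. *)
Lemma LipT_complete : complete (LipT G D star) (DbarL G D star).
Proof.
  intros z Hz. set (fz := fun n => proj1_sig (z n)).
  destruct (Hz 1 (H0_continuity_pt 1 ltac:(lra)) (1/2) ltac:(lra)) as [N0 HN0].
  destruct (classic (exists n, (N0 <= n)%nat /\ ~ Pi (fz n))) as [[n [Hn Hnp]]|Hall].
  - exists (z n). apply (wconv_eventually_eq (fun _ => H0)) with N0; [|apply wconv_const].
    intros p Hp. unfold DbarL. fold (fz p) (fz n).
    rewrite (Dbar_near_H0_eq (fz p) (fz n)) by (apply HN0 || tauto; auto). symmetry; apply Dbar_self.
  - assert (HPi : forall n, (N0 <= n)%nat -> Pi (fz n)).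
    { intros n Hn. apply NNPP; intros H. apply Hall; eauto. }
    destruct (Pi_complete (fun n => fz (N0 + n)%nat)) as [f [Hf Hconv]].
    + intros n; apply HPi; lia.
    + intros t Ht eps He. destruct (Hz t Ht eps He) as [N HN]. exists N. intros n p Hn Hp.
      specialize (HN (N0 + n)%nat (N0 + p)%nat ltac:(lia) ltac:(lia)).
      unfold DbarL in HN. rewrite Dbar_Pi in HN by (apply HPi; lia). exact HN.
    + exists (exist _ f (Pi_Lip _ Hf)).
      apply (wconv_eventually_eq (fun n => DD (fz (N0 + (n - N0))%nat) f)) with N0.
      * intros n Hn. unfold DbarL; simpl. fold (fz n). rewrite Dbar_Pi by auto.
        do 3 f_equal. lia.
      * apply (wconv_shift (fun n => DD (fz (N0 + n)%nat) f)). exact Hconv.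
Qed.

Lemma delta_Lip a : Lip (delta G D a).
Proof. split; [intros; apply D_Dplus|intros x y; apply D_triangle]. Qed.

Lemma delta_Pi a : Pi (delta G D a).
Proof.
  split; [apply delta_Lip|]. exists (fun _ => a). split.
  - intros t Ht eps He. exists 0%nat. intros. rewrite D_refl. solve_Rabs.
  - intros x. unfold delta. rewrite D_sym. apply wconv_const.
Qed.

Lemma Dbar_delta a b : Dbar G D star (delta G D a) (delta G D b) = D a b.
Proof.
  rewrite Dbar_Pi by apply delta_Pi. apply fle_antisym.
  - intros t. apply fsup_least; [|apply Dplus_ge0; auto].
    intros x. unfold delta. rewrite (D_sym x a). apply D_triangle.
  - pose proof (DD_ub (delta G D a) (delta G D b) a (delta_Lip a) (delta_Lip b)) as H.
    unfold delta in H. rewrite D_refl, star_H0_l in H; auto.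
Qed.

Lemma delta_mul (mul : G -> G -> G) (e : G) (inv : G -> G) :
  is_group G mul e inv -> invariant G mul D ->
  forall a b, delta G D (mul a b) = odot G mul star (delta G D a) (delta G D b).
Proof.
  intros [Hassoc [Hunit Hinv]] Hinvar a b. apply functional_extensionality. intros x.
  unfold odot, delta.
  set (F := fun yz : {p : G * G | mul (fst p) (snd p) = x} =>
              star (D (fst (proj1_sig yz)) a) (D (snd (proj1_sig yz)) b)).
  assert (HF : forall i, Dplus (F i)) by (intros; apply Dplus_star; auto).
  apply fle_antisym; intros t.
  - assert (Hx : mul (mul x (inv b)) b = x) by (rewrite Hassoc, (proj1 (Hinv b)); apply Hunit).
    pose proof (fsup_ub F HF (exist _ (mul x (inv b), b) Hx) t) as H. unfold F in H; simpl in H.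
    rewrite D_refl, star_H0_r, <- (proj1 (Hinvar (mul x (inv b)) a b)), Hx in H; auto.
  - apply fsup_least; auto; [|apply Dplus_ge0; auto].
    intros [[y z] Hyz]. unfold F; simpl in *. subst x.
    rewrite <- (proj1 (Hinvar y a z)), <- (proj2 (Hinvar z b a)). apply D_triangle.
Qed.

End PMSpace.
End TriangleFunction.

Theorem mainTheorem14 :
  forall (G : Type) (D : G -> G -> DF) (star : DF -> DF -> DF),
    PMspace G D star -> star_continuous star ->
    (PMspace (LipT G D star) (DbarL G D star) star /\
     complete (LipT G D star) (DbarL G D star) /\
     (forall a, isLip G D star (delta G D a)) /\
     (forall a b, Dbar G D star (delta G D a) (delta G D b) = D a b)) /\
    (forall (mul : G -> G -> G) (e : G) (inv : G -> G),
       is_group G mul e inv -> invariant G mul D -> sup_continuous star ->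
       forall a b, delta G D (mul a b) = odot G mul star (delta G D a) (delta G D b)).
Proof.
  intros G D star [Htf [HD [HD0 [Hsym Htri]]]] Hcont. split; [split; [|split; [|split]]|].
  - apply LipT_PMspace; auto.
  - apply LipT_complete; auto.
  - apply delta_Lip; auto.
  - apply Dbar_delta; auto.
  - intros mul e inv Hgroup Hinvar _. apply delta_mul with e inv; auto.
Qed.
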